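(* Let $(Q,\mathcal D,L)$ be a $G$-Chaplygin system whose shape space $S=Q/G$ has dimension $r\ge 2$, and let $H$, $C_{ij}^k$, $\nu$ be as in the context. Suppose that: (1) the reduced equations of motion preserve the measure $\mu=\exp(\sigma(s))\,\nu$ for some $\sigma\in C^\infty(S)$; (2) the gyroscopic coefficients satisfy hypothesis (H) everywhere on $S$. Then, after the time and momentum reparametrisation $$dt=\exp\Big(\tfrac{\sigma(s)}{1-r}\Big)\,d\tau,\qquad p_i=\exp\Big(\tfrac{\sigma(s)}{1-r}\Big)\,\tilde p_i,\quad i=1,\dots,r,$$ the reduced equations of motion take the Hamiltonian form $$\frac{ds^i}{d\tau}=\frac{\partial\tilde H}{\partial\tilde p_i},\qquad \frac{d\tilde p_i}{d\tau}=-\frac{\partial\tilde H}{\partial s^i},\qquad i=1,\dots,r,$$ where $\tilde H(s,\tilde p)=H\big(s,\exp\big(\tfrac{\sigma(s)}{1-r}\big)\tilde p\big)$.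
   Context: A nonholonomic system is a triple $(Q,\mathcal D,L)$ with $Q$ an $n$-dimensional manifold, $\mathcal D\subset TQ$ a rank-$r$ non-integrable distribution, and $L=K-U$ where $K(v)=\tfrac12\langle v,v\rangle$ for a Riemannian metric $\langle\cdot,\cdot\rangle$ on $Q$ and $U:Q\to\mathbb R$. It is a $G$-Chaplygin system if a Lie group $G$ (Lie algebra $\mathfrak g$) acts freely and properly on $Q$ such that: (i) $G$ acts by isometries and $U$ is $G$-invariant; (ii) $T_q\Phi_g(\mathcal D_q)=\mathcal D_{\Phi_g(q)}$ for all $g\in G$; (iii) $T_qQ=\mathcal D_q\oplus(\mathfrak g\cdot q)$ for all $q\in Q$. The shape space is $S=Q/G$ (dimension $r$), with projection $\pi:Q\to S$. For $v\in T_{\pi(q)}S$, the horizontal lift $\mathrm{hor}_q(v)$ is the unique vector in $\mathcal D_q$ with $T_q\pi(\mathrm{hor}_q(v))=v$. In local coordinates $(s^1,\dots,s^r)$ on $S$, put $K_{ij}(s)=\langle\mathrm{hor}_q(\partial_{s^i}),\mathrm{hor}_q(\partial_{s^j})\rangle_q$ ($q\in\pi^{-1}(s)$), with inverse matrix $K^{ij}$; $U$ also denotes the induced function on $S$. The reduced Hamiltonian on $T^*S$ (canonical coordinates $(s,p)$) is $H(s,p)=\tfrac12\sum_{i,j}K^{ij}(s)p_ip_j+U(s)$. The gyroscopic coefficients are $C_{ij}^k(s)=\sum_{l}K^{kl}(s)\langle[\mathrm{hor}_q(\partial_{s^i}),\mathrm{hor}_q(\partial_{s^j})],\mathrm{hor}_q(\partial_{s^l})\rangle_q$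 ($[\cdot,\cdot]$ the Lie bracket of vector fields on $Q$; independent of $q\in\pi^{-1}(s)$); they satisfy $C_{ij}^k=-C_{ji}^k$ and are the components of a $(1,2)$ tensor field $\mathcal T=\sum C_{ij}^k\,ds^i\otimes ds^j\otimes\partial_{s^k}$ on $S$. The reduced equations of motion on $T^*S$ are $\frac{ds^i}{dt}=\frac{\partial H}{\partial p_i}$, $\frac{dp_i}{dt}=-\frac{\partial H}{\partial s^i}-\sum_{j,k}C_{ij}^kp_k\frac{\partial H}{\partial p_j}$, $i=1,\dots,r$. The Liouville volume on $T^*S$ is $\nu=ds^1\cdots ds^r\,dp_1\cdots dp_r$. Hypothesis (H): $C_{ij}^k=0$ whenever $i,j,k$ are pairwise distinct, and $C_{ij}^j=C_{ik}^k$ for all $j,k\neq i$. *)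

From Stdlib Require Import Reals ClassicalEpsilon.
From mathcomp Require Import all_boot.

Set Implicit Arguments.
Unset Strict Implicit.
Unset Printing Implicit Defensive.

Local Open Scope R_scope.

(* Points of a coordinate chart of the shape space S (dimension r) and
   fibre coordinates of T*S are vectors 'I_r -> R. *)
Definition vec (r : nat) := 'I_r -> R.

Definition sumR (r : nat) (F : 'I_r -> R) : R := \big[Rplus/0]_(i < r) F i.

Definition shift (r : nat) (x : vec r) (i : 'I_r) (h : R) : vec r :=
  fun j => if j == i then x j + h else x j.

(* partial derivative d g / d x^i at x (the derivative of h |-> g(x + h e_i)
   at 0, chosen classically; it is the true partial derivative whenever
   that exists) *)
Definition dpart (r : nat) (g : vec r -> R) (i : 'I_r) (x : vec r) : R :=
  epsilon (inhabits 0) (fun l => derivable_pt_lim (fun h => g (shift x i h)) 0 l).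

Definition dS (r : nat) (g : vec r -> vec r -> R) (i : 'I_r) (s p : vec r) : R :=
  dpart (fun s' => g s' p) i s.
Definition dP (r : nat) (g : vec r -> vec r -> R) (i : 'I_r) (s p : vec r) : R :=
  dpart (fun p' => g s p') i p.

Definition open_chart (r : nat) (O : vec r -> Prop) : Prop :=
  forall x, O x -> exists d, 0 < d /\
    forall y : vec r, (forall i, Rabs (y i - x i) < d) -> O y.

Definition cont_on (r : nat) (O : vec r -> Prop) (g : vec r -> R) : Prop :=
  forall x, O x -> forall e, 0 < e -> exists d, 0 < d /\
    forall y : vec r, (forall i, Rabs (y i - x i) < d) -> Rabs (g y - g x) < e.

Fixpoint Ck (r : nat) (n : nat) (O : vec r -> Prop) (g : vec r -> R) : Prop :=
  cont_on O g /\
  match n with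
  | 0 => True
  | S m => forall i : 'I_r,
      (forall x, O x -> exists l, derivable_pt_lim (fun h => g (shift x i h)) 0 l)
      /\ Ck m O (dpart g i)
  end.

Definition smooth_on (r : nat) (O : vec r -> Prop) (g : vec r -> R) : Prop :=
  forall n, Ck n O g.

Definition redH (r : nat) (Kinv : 'I_r -> 'I_r -> vec r -> R) (U : vec r -> R)
  (s p : vec r) : R :=
  / 2 * sumR (fun i => sumR (fun j => Kinv i j s * p i * p j)) + U s.

Definition Xs (r : nat) (H : vec r -> vec r -> R) (i : 'I_r) (s p : vec r) : R :=
  dP H i s p.
Definition Xp (r : nat) (H : vec r -> vec r -> R)
  (C : 'I_r -> 'I_r -> 'I_r -> vec r -> R) (i : 'I_r) (s p : vec r) : R :=
  - dS H i s p - sumR (fun j => sumR (fun k => C i j k s * p k * dP H j s p)).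

(* The reduced equations preserve the measure exp(sigma(s)) ds dp on the
   chart domain O x R^r: the vector field has zero divergence with respect
   to this measure, i.e. div(exp(sigma) X) = 0 in the coordinates (s,p). *)
Definition preserves_measure (r : nat) (O : vec r -> Prop)
  (H : vec r -> vec r -> R) (C : 'I_r -> 'I_r -> 'I_r -> vec r -> R)
  (sigma : vec r -> R) : Prop :=
  forall s p, O s ->
    sumR (fun i => dS (fun s' p' => exp (sigma s') * Xs H i s' p') i s p)
  + sumR (fun i => dP (fun s' p' => exp (sigma s') * Xp H C i s' p') i s p) = 0.

Definition hypH (r : nat) (O : vec r -> Prop)
  (C : 'I_r -> 'I_r -> 'I_r -> vec r -> R) : Prop :=
  forall s, O s ->
    (forall i j k : 'I_r, i != j -> j != k -> i != k -> C i j k s = 0) /\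
    (forall i j k : 'I_r, j != i -> k != i -> C i j j s = C i k k s).

From Stdlib Require Import Reals ClassicalEpsilon FunctionalExtensionality Lra.
From HB Require Import structures.
From mathcomp Require Import all_boot.

(* Invariance of [exp(sigma) ds dp] says that [exp(sigma) X] is divergence free.
   In that divergence the mixed second derivatives of H cancel, and the terms
   [C_ij^k p_k d^2H/dp_i dp_j] vanish because C is skew in (i, j) while the
   Hessian is symmetric; what is left is
   [sum_j (d_j sigma - sum_i C_ij^i) dH/dp_j = 0] for every p.  Taking for p the
   coefficient vector itself turns this into a value of the kinetic quadratic
   form, so positivity gives [d_j sigma = sum_i C_ij^i].  Under (H) all
   [C_ji^i], i <> j, equal one number phi_j, whence [d_j sigma = (1 - r) phi_j]
   and [sum_k C_ij^k p_k = phi_i p_j - phi_j p_i].  The gyroscopic force is then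
   [phi_i <p, dH/dp> - p_i <phi, dH/dp>], which is exactly cancelled by the extra
   terms that the time change [dt = f dtau] and the rescaling [p = f p~] with
   [f = exp(sigma / (1 - r))] produce in Hamilton's equations for [H~]. *)

Set Implicit Arguments.
Unset Strict Implicit.
Unset Printing Implicit Defensive.
Local Open Scope R_scope.

HB.instance Definition _ := Monoid.isComLaw.Build R 0 Rplus
  (fun a b c => esym (Rplus_assoc a b c)) Rplus_comm Rplus_0_l.
HB.instance Definition _ := Monoid.isComLaw.Build R 1 Rmult
  (fun a b c => esym (Rmult_assoc a b c)) Rmult_comm Rmult_1_l.
HB.instance Definition _ := Monoid.isMulLaw.Build R 0 Rmult Rmult_0_l Rmult_0_r.
HB.instance Definition _ := Monoid.isAddLaw.Build R Rmult Rplus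
  Rmult_plus_distr_r Rmult_plus_distr_l.

Section FiniteSums.
Variable r : nat.
Implicit Types (F G : 'I_r -> R) (c : R).

Lemma eq_sumR F G : (forall i, F i = G i) -> sumR F = sumR G.
Proof. by move=> FG; apply: eq_bigr => i _. Qed.

Lemma sumRD F G : sumR (fun i => F i + G i) = sumR F + sumR G.
Proof. exact: big_split. Qed.

Lemma sumRN F : sumR (fun i => - F i) = - sumR F.
Proof. by rewrite /sumR (big_morph Ropp Ropp_plus_distr Ropp_0). Qed.

Lemma sumRB F G : sumR (fun i => F i - G i) = sumR F - sumR G.
Proof. by rewrite sumRD sumRN. Qed.

Lemma sumR_mull c F : c * sumR F = sumR (fun i => c * F i).
Proof. exact: big_distrr. Qed.

Lemma sumR_mulr c F : sumR F * c = sumR (fun i => F i * c).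
Proof. exact: big_distrl. Qed.

Lemma exchange_sumR (F : 'I_r -> 'I_r -> R) :
  sumR (fun i => sumR (fun j => F i j)) = sumR (fun j => sumR (fun i => F i j)).
Proof. exact: exchange_big. Qed.

Lemma sumR0 : sumR (fun _ : 'I_r => 0) = 0.
Proof. exact: big1. Qed.

Lemma sumR_cst c : sumR (fun _ : 'I_r => c) = INR r * c.
Proof.
rewrite /sumR big_const_ord; elim: r => [|n IH]; first by rewrite /=; ring.
by rewrite iterS IH S_INR; ring.
Qed.

Lemma sumR_pred1 (i : 'I_r) F : sumR (fun k => if k == i then F k else 0) = F i.
Proof. by rewrite /sumR -big_mkcond big_pred1_eq. Qed.

End FiniteSums.

Lemma derivable_pt_lim_eq f x l l' :
  l = l' -> derivable_pt_lim f x l -> derivable_pt_lim f x l'.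
Proof. by move->. Qed.

Lemma derivable_pt_lim_sumR r (F : 'I_r -> R -> R) (l : 'I_r -> R) x :
  (forall k, derivable_pt_lim (F k) x (l k)) ->
  derivable_pt_lim (fun y => sumR (fun k => F k y)) x (sumR l).
Proof.
move=> dF; rewrite /sumR; elim: (index_enum _) => [|k s IH].
  rewrite big_nil; apply: (derivable_pt_lim_ext (fun _ => 0)).
    by move=> y; rewrite big_nil.
  exact: derivable_pt_lim_const.
rewrite big_cons; apply: (derivable_pt_lim_ext (fun y => F k y + \big[Rplus/0]_(j <- s) F j y)).
  by move=> y; rewrite big_cons.
exact: derivable_pt_lim_plus.
Qed.

Lemma derivable_pt_lim_affine c d x : derivable_pt_lim (fun h => c + h * d) x d.
Proof.
apply: (derivable_pt_lim_eq _ (derivable_pt_lim_plus _ _ _ _ _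
  (derivable_pt_lim_const c x) (derivable_pt_lim_scal_right _ _ _ d (derivable_pt_lim_id x)))).
ring.
Qed.

Lemma derivable_pt_lim_translate F c l :
  derivable_pt_lim (fun h => F (c + h)) 0 l -> derivable_pt_lim F c l.
Proof.
move=> dF eps eps0; have [del Hdel] := dF eps eps0; exists del => h h0 hh.
by have := Hdel h h0 hh; rewrite Rplus_0_l Rplus_0_r.
Qed.

Lemma derivable_pt_lim_exp_div k z :
  derivable_pt_lim (fun y => exp (y / k)) z (exp (z / k) / k).
Proof.
apply: (derivable_pt_lim_eq _ (derivable_pt_lim_comp _ _ _ _ _
  (derivable_pt_lim_scal_right _ _ _ (/ k) (derivable_pt_lim_id z))
  (derivable_pt_lim_exp _))).
rewrite /Ranalysis1.id /Rdiv; ring.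
Qed.

Lemma continuity_pt_ball f x : continuity_pt f x ->
  forall e, 0 < e -> exists d, 0 < d /\
    forall y, Rabs (y - x) < d -> Rabs (f y - f x) < e.
Proof.
move=> cf e e0; have [d [d0 Hd]] := cf e e0; exists d; split => // y hy.
have [<-|xy] := Req_dec x y; first by rewrite Rminus_diag Rabs_R0.
exact: (Hd y (conj (conj I xy) hy)).
Qed.

Definition kdelta r (i a : 'I_r) : R := if a == i then 1 else 0.

Lemma sumR_kdeltar r (i : 'I_r) (F : 'I_r -> R) : sumR (fun k => F k * kdelta i k) = F i.
Proof.
rewrite -(sumR_pred1 i F); apply: eq_sumR => k; rewrite /kdelta; case: (k == i); ring.
Qed.

Lemma sumR_kdeltal r (i : 'I_r) (F : 'I_r -> R) : sumR (fun k => kdelta i k * F k) = F i.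
Proof. by rewrite -(sumR_kdeltar i F); apply: eq_sumR => k; rewrite Rmult_comm. Qed.

Section Shift.
Variable r : nat.
Implicit Types (x : vec r) (i : 'I_r).

Lemma shiftE x i h : shift x i h = (fun a => x a + h * kdelta i a).
Proof.
by apply: functional_extensionality => a; rewrite /shift /kdelta; case: (a == i); ring.
Qed.

Lemma shift0 x i : shift x i 0 = x.
Proof. by rewrite shiftE; apply: functional_extensionality => a; ring. Qed.

Lemma shift_deriv x i k z : derivable_pt_lim (fun h => shift x i h k) z (kdelta i k).
Proof.
apply: (derivable_pt_lim_ext (fun h => x k + h * kdelta i k)); last exact: derivable_pt_lim_affine.
by move=> h; rewrite shiftE.
Qed.

Lemma shiftD x i a b : shift (shift x i a) i b = shift x i (a + b).
Proof. by rewrite !shiftE; apply: functional_extensionality => k; ring. Qed.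

End Shift.

Lemma dpartE r (g : vec r -> R) i x l :
  derivable_pt_lim (fun h => g (shift x i h)) 0 l -> dpart g i x = l.
Proof.
move=> dg; have ex : exists l, derivable_pt_lim (fun h => g (shift x i h)) 0 l by exists l.
exact: uniqueness_limite (epsilon_spec (inhabits 0) _ ex) dg.
Qed.

Lemma Rabs_le_between c l : Rmin 0 l <= c <= Rmax 0 l -> Rabs c <= Rabs l.
Proof.
rewrite /Rmin /Rmax /Rabs.
by case: Rle_dec => ? [? ?]; case: Rcase_abs; case: Rcase_abs; lra.
Qed.

Section C1.
Variables (r : nat) (Om : vec r -> Prop) (g : vec r -> R).
Hypothesis hg : Ck 1 Om g.

Lemma C1_dpart x i : Om x ->
  derivable_pt_lim (fun h => g (shift x i h)) 0 (dpart g i x).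
Proof.
move=> Ox; have [ex _] := hg.2 i; have [l dg] := ex x Ox.
by rewrite (dpartE dg).
Qed.

Lemma C1_dpart_cont i : cont_on Om (dpart g i).
Proof. by have [_ [? _]] := hg.2 i. Qed.

Lemma C1_increment Y M l A e :
  (forall t, Rabs t <= Rabs l -> Om (shift Y M t) /\ Rabs (dpart g M (shift Y M t) - A) <= e) ->
  Rabs (g (shift Y M l) - g Y - A * l) <= e * Rabs l.
Proof.
move=> near.
have dg c : Rmin 0 l <= c <= Rmax 0 l ->
    derivable_pt_lim (fun t => g (shift Y M t) - A * t) c (dpart g M (shift Y M c) - A).
  move=> /Rabs_le_between /near [Oc _]; apply: derivable_pt_lim_minus.
    apply: derivable_pt_lim_translate.
    by apply: (derivable_pt_lim_ext _ _ _ _ _ (C1_dpart M Oc)) => h; rewrite shiftD.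
  apply: (derivable_pt_lim_eq (Rmult_1_r A)); apply: derivable_pt_lim_scal.
  exact: derivable_pt_lim_id.
have [c [mvt /Rabs_le_between /near [_ nc]]] := MVT_abs _ _ _ _ dg.
rewrite (_ : g (shift Y M l) - g Y - A * l
  = g (shift Y M l) - A * l - (g (shift Y M 0) - A * 0)); last by rewrite shift0; ring.
by rewrite mvt Rminus_0_r; apply: Rmult_le_compat_r => //; exact: Rabs_pos.
Qed.

End C1.

Lemma derivable_pt_lim_approx D l u0 A d :
  D u0 = 0 -> l u0 = 0 -> derivable_pt_lim l u0 d ->
  (forall e, 0 < e -> exists eta, 0 < eta /\ forall h, Rabs h < eta ->
      Rabs (D (u0 + h) - A * l (u0 + h)) <= e * Rabs (l (u0 + h))) ->
  derivable_pt_lim D u0 (A * d).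
Proof.
move=> D0 l0 dl approx eps eps0.
have a0 := Rabs_pos A; have b0 := Rabs_pos d.
have e1_0 : 0 < Rmin 1 (eps / (2 * (Rabs A + 1))).
  by apply: Rmin_pos; [lra | apply: Rdiv_lt_0_compat; lra].
have [del Hdel] := dl _ e1_0.
have [eta [eta0 Heta]] := approx (eps / (2 * (Rabs d + 1))) ltac:(apply: Rdiv_lt_0_compat; lra).
have m0 : 0 < Rmin del eta by apply: Rmin_pos => //; exact: cond_pos.
exists (mkposreal _ m0) => h h0 /= hh.
have hdel : Rabs h < del by apply: Rlt_le_trans hh (Rmin_l _ _).
have heta : Rabs h < eta by apply: Rlt_le_trans hh (Rmin_r _ _).
have := Hdel h h0 hdel; rewrite l0 Rminus_0_r; set q := l (u0 + h) / h => Hq.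
have := Heta h heta; rewrite D0 Rminus_0_r.
have -> : D (u0 + h) / h - A * d = (D (u0 + h) - A * l (u0 + h)) / h + A * (q - d).
  by rewrite /q; field.
set E := D (u0 + h) - A * l (u0 + h) => HE.
have hpos : 0 < Rabs h by apply: Rabs_pos_lt.
have E_le : Rabs (E / h) <= eps / (2 * (Rabs d + 1)) * Rabs q.
  rewrite /q /Rdiv !Rabs_mult Rabs_inv -Rmult_assoc.
  by apply: (Rmult_le_compat_r _ _ _ _ HE); apply/Rlt_le/Rinv_0_lt_compat.
have q_le : Rabs q <= Rabs d + 1.
  have := Rabs_triang (q - d) d; rewrite (_ : q - d + d = q); last ring.
  have := Rmin_l 1 (eps / (2 * (Rabs A + 1))); lra.
have qd_le : Rabs (A * (q - d)) <= Rabs A * (eps / (2 * (Rabs A + 1))).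
  rewrite Rabs_mult; apply: Rmult_le_compat_l => //.
  have := Rmin_r 1 (eps / (2 * (Rabs A + 1))); lra.
have half1 : eps / (2 * (Rabs d + 1)) * Rabs q <= eps / 2.
  rewrite [X in _ <= X](_ : eps / 2 = eps / (2 * (Rabs d + 1)) * (Rabs d + 1)); last by field; lra.
  by apply: Rmult_le_compat_l q_le; apply: Rlt_le; apply: Rdiv_lt_0_compat; lra.
have half2 : Rabs A * (eps / (2 * (Rabs A + 1))) < eps / 2.
  rewrite [X in _ < X](_ : eps / 2 = (Rabs A + 1) * (eps / (2 * (Rabs A + 1)))); last by field; lra.
  by apply: Rmult_lt_compat_r; [apply: Rdiv_lt_0_compat | ]; lra.
have := Rabs_triang (E / h) (A * (q - d)); lra.
Qed.

Lemma common_radius n (P : 'I_n -> R -> Prop) :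
  (forall k e e', 0 < e' <= e -> P k e -> P k e') ->
  (forall k, exists e, 0 < e /\ P k e) -> exists e, 0 < e /\ forall k, P k e.
Proof.
move=> mono ex.
suff /(_ n) [e [e0 Pe]] : forall m, exists e, 0 < e /\ forall k : 'I_n, (k < m)%N -> P k e.
  by exists e; split => // k; apply: Pe.
elim=> [|m [e [e0 IH]]]; first by exists 1; split => //; lra.
have [mn|nm] := ltnP m n; last first.
  by exists e; split => // k _; apply: IH; apply: leq_trans (ltn_ord k) nm.
have [e' [e'0 Pe']] := ex (Ordinal mn).
exists (Rmin e e'); split => [|k]; first exact: Rmin_pos.
have min0 := Rmin_pos _ _ e0 e'0.
rewrite ltnS leq_eqVlt => /orP [/eqP km|km].
  have -> : k = Ordinal mn by apply: val_inj.
  exact: (mono _ e' _ (conj min0 (Rmin_r _ _)) Pe').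
exact: (mono _ e _ (conj min0 (Rmin_l _ _)) (IH k km)).
Qed.

Section ChainRule.
Variables (r : nat) (Om : vec r -> Prop) (g : vec r -> R).
Variables (x : R -> vec r) (u0 : R) (dx : vec r).
Hypotheses (hO : open_chart Om) (hg : Ck 1 Om g) (Ox : Om (x u0))
  (hx : forall k, derivable_pt_lim (fun u => x u k) u0 (dx k)).

(* The chain rule telescopes over [y 0 u = x u0], ..., [y r u = x u], which
   change one coordinate at a time. *)
Let y (m : nat) u : vec r := fun k => if (k < m)%N then x u k else x u0 k.

Lemma chain_rule_step (M : 'I_r) :
  derivable_pt_lim (fun u => g (shift (y M u) M (x u M - x u0 M)) - g (y M u)) u0
    (dpart g M (x u0) * dx M).
Proof.
apply: (derivable_pt_lim_approx (l := fun u => x u M - x u0 M)).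
- by rewrite Rminus_diag shift0 Rminus_diag.
- exact: Rminus_diag.
- apply: (derivable_pt_lim_eq (Rminus_0_r _)); apply: derivable_pt_lim_minus => //.
  exact: derivable_pt_lim_const.
move=> e e0.
have [d0 [d00 inO]] := hO Ox.
have [d1 [d10 near]] := C1_dpart_cont hg M Ox e0.
have dd0 : 0 < Rmin d0 d1 by apply: Rmin_pos.
have x_cont k := continuity_pt_ball (@derivable_continuous_pt _ _ (exist _ _ (hx k))) dd0.
have [eta [eta0 Heta]] : exists t, 0 < t /\
    forall k u, Rabs (u - u0) < t -> Rabs (x u k - x u0 k) < Rmin d0 d1.
  apply: (common_radius (P := fun k t =>
    forall u, Rabs (u - u0) < t -> Rabs (x u k - x u0 k) < Rmin d0 d1)) x_cont.
  by move=> k a b [b0 ba] H u hu; apply: H; lra.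
exists eta; split => // h hh.
set Y := y M (u0 + h); set l := x (u0 + h) M - x u0 M.
have x_near k : Rabs (x (u0 + h) k - x u0 k) < Rmin d0 d1.
  by apply: Heta; rewrite (_ : u0 + h - u0 = h); last ring.
have close t k : Rabs t <= Rabs l -> Rabs (shift Y M t k - x u0 k) < Rmin d0 d1.
  move=> tl; rewrite /shift /Y /y; case: eqP => [->|_].
    by rewrite ltnn (_ : x u0 M + t - x u0 M = t); [apply: Rle_lt_trans tl (x_near M) | ring].
  by case: ifP => _; [apply: x_near | rewrite Rminus_diag Rabs_R0].
apply: (C1_increment hg) => t tl; split.
  by apply: inO => k; apply: Rlt_le_trans (close t k tl) (Rmin_l _ _).
by apply/Rlt_le/near => k; apply: Rlt_le_trans (close t k tl) (Rmin_r _ _).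
Qed.

Lemma chain_rule_partial m : (m <= r)%N ->
  derivable_pt_lim (fun u => g (y m u)) u0
    (sumR (fun k : 'I_r => if (k < m)%N then dpart g k (x u0) * dx k else 0)).
Proof.
elim: m => [|m IH] mr.
  rewrite sumR0; apply: (derivable_pt_lim_ext (fun _ => g (x u0))).
    by move=> u; congr g; apply: functional_extensionality => k; rewrite /y.
  exact: derivable_pt_lim_const.
set M : 'I_r := Ordinal mr.
have kM_nat (k : 'I_r) : k != M -> (k == m :> nat) = false.
  by move=> kM; apply/eqP => km; move/eqP: kM; apply; apply: val_inj.
have yS u : y m.+1 u = shift (y M u) M (x u M - x u0 M).
  apply: functional_extensionality => k; rewrite /shift /y.
  have [->|kM] := eqVneq k M; first by rewrite /= ltnSn ltnn; ring.
  by rewrite ltnS leq_eqVlt kM_nat.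
apply: (derivable_pt_lim_ext (fun u => g (y M u) +
   (g (shift (y M u) M (x u M - x u0 M)) - g (y M u)))).
  by move=> u; rewrite yS; ring.
apply: (derivable_pt_lim_eq _ (derivable_pt_lim_plus _ _ _ _ _
  (IH (ltnW mr)) (chain_rule_step M))).
rewrite -(sumR_pred1 M (fun k => dpart g k (x u0) * dx k)) -sumRD; apply: eq_sumR => k.
have [->|kM] := eqVneq k M; first by rewrite /= ltnSn ltnn; ring.
rewrite [(k < m.+1)%N]ltnS [(k <= m)%N]leq_eqVlt kM_nat //=.
by case: ifP => _; ring.
Qed.

Lemma chain_rule :
  derivable_pt_lim (fun u => g (x u)) u0 (sumR (fun k => dpart g k (x u0) * dx k)).
Proof.
apply: (derivable_pt_lim_ext _ _ _ _ _ (derivable_pt_lim_eq _ (chain_rule_partial (leqnn r)))).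
  by move=> u; congr g; apply: functional_extensionality => k; rewrite /y ltn_ord.
by apply: eq_sumR => k; rewrite ltn_ord.
Qed.

End ChainRule.

Definition qform r (A : 'I_r -> 'I_r -> R) (p : vec r) : R :=
  sumR (fun a => sumR (fun b => A a b * p a * p b)).

Definition qgrad r (A : 'I_r -> 'I_r -> R) (j : 'I_r) (p : vec r) : R :=
  sumR (fun b => (A j b + A b j) * p b).

Section QuadraticForms.
Variable r : nat.
Implicit Types (A : 'I_r -> 'I_r -> R) (p : vec r).

Lemma qformZ A c p : qform A (fun a => c * p a) = c ^ 2 * qform A p.
Proof.
rewrite /qform sumR_mull; apply: eq_sumR => a; rewrite sumR_mull.
by apply: eq_sumR => b; ring.
Qed.

Lemma qgradZ A j c p : qgrad A j (fun a => c * p a) = c * qgrad A j p.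
Proof. by rewrite /qgrad sumR_mull; apply: eq_sumR => b; ring. Qed.

Lemma qform_euler A p : qform A p = / 2 * sumR (fun a => p a * qgrad A a p).
Proof.
have -> : sumR (fun a => p a * qgrad A a p)
    = qform A p + sumR (fun a => sumR (fun b => A b a * p b * p a)).
  rewrite /qform -sumRD; apply: eq_sumR => a.
  by rewrite /qgrad sumR_mull -sumRD; apply: eq_sumR => b; ring.
rewrite (exchange_sumR (fun a b => A b a * p b * p a)) -/(qform A p); field.
Qed.

Lemma qform_shift_deriv A p j :
  derivable_pt_lim (fun h => qform A (shift p j h)) 0 (qgrad A j p).
Proof.
apply: (derivable_pt_lim_ext (fun h => qform A (fun a => p a + h * kdelta j a))).
  by move=> h; rewrite shiftE.
apply: (derivable_pt_lim_eq (l := sumR (fun a => sumR (fun b =>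
    A a b * (kdelta j a * p b + p a * kdelta j b))))); last first.
  apply: derivable_pt_lim_sumR => a; apply: derivable_pt_lim_sumR => b.
  apply: (derivable_pt_lim_eq _ (derivable_pt_lim_mult _ _ _ _ _
    (derivable_pt_lim_scal _ (A a b) _ _ (derivable_pt_lim_affine (p a) (kdelta j a) 0))
    (derivable_pt_lim_affine (p b) (kdelta j b) 0))).
  by rewrite /mult_real_fct; ring.
have -> : sumR (fun a => sumR (fun b => A a b * (kdelta j a * p b + p a * kdelta j b)))
  = sumR (fun a => kdelta j a * sumR (fun b => A a b * p b))
    + sumR (fun a => sumR (fun b => A a b * p a * kdelta j b)).
  rewrite -sumRD; apply: eq_sumR => a; rewrite sumR_mull -sumRD; apply: eq_sumR => b; ring.
rewrite exchange_sumR sumR_kdeltal.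
under [X in _ + X]eq_sumR => b do rewrite -sumR_mulr.
rewrite sumR_kdeltar /qgrad -sumRD; apply: eq_sumR => b; ring.
Qed.

Lemma qgrad_shift_deriv A j p i :
  derivable_pt_lim (fun h => qgrad A j (shift p i h)) 0 (A j i + A i j).
Proof.
apply: (derivable_pt_lim_ext (fun h => qgrad A j (fun a => p a + h * kdelta i a))).
  by move=> h; rewrite shiftE.
rewrite -(sumR_kdeltar i (fun b => A j b + A b j)).
apply: derivable_pt_lim_sumR => b.
exact: (derivable_pt_lim_eq _ (derivable_pt_lim_scal _ (A j b + A b j) _ _
  (derivable_pt_lim_affine (p b) (kdelta i b) 0))).
Qed.

Lemma qform_coef_deriv (A : R -> 'I_r -> 'I_r -> R) A' x p :
  (forall a b, derivable_pt_lim (fun h => A h a b) x (A' a b)) ->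
  derivable_pt_lim (fun h => qform (A h) p) x (qform A' p).
Proof.
move=> dA; apply: derivable_pt_lim_sumR => a; apply: derivable_pt_lim_sumR => b.
by do 2 apply: derivable_pt_lim_scal_right.
Qed.

Lemma qgrad_coef_deriv (A : R -> 'I_r -> 'I_r -> R) A' x j p :
  (forall a b, derivable_pt_lim (fun h => A h a b) x (A' a b)) ->
  derivable_pt_lim (fun h => qgrad (A h) j p) x (qgrad A' j p).
Proof.
move=> dA; apply: derivable_pt_lim_sumR => b; apply: derivable_pt_lim_scal_right.
exact: derivable_pt_lim_plus.
Qed.

End QuadraticForms.

Section ReducedHamiltonian.
Variables (r : nat) (Om : vec r -> Prop) (K : 'I_r -> 'I_r -> vec r -> R) (U : vec r -> R).
Hypotheses (hK : forall a b, Ck 1 Om (K a b)) (hU : Ck 1 Om U).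

Lemma dP_redH j s p : dP (redH K U) j s p = / 2 * qgrad (fun a b => K a b s) j p.
Proof.
apply: dpartE; apply: (derivable_pt_lim_eq _ (derivable_pt_lim_plus _ _ _ _ _
  (derivable_pt_lim_scal _ (/ 2) _ _ (qform_shift_deriv _ p j))
  (derivable_pt_lim_const (U s) 0))).
ring.
Qed.

Lemma dS_redH i s p : Om s ->
  dS (redH K U) i s p = / 2 * qform (fun a b => dpart (K a b) i s) p + dpart U i s.
Proof.
move=> Os; apply: dpartE; apply: derivable_pt_lim_plus.
  apply: derivable_pt_lim_scal; apply: qform_coef_deriv => a b.
  exact (C1_dpart (hK a b) i Os).
exact (C1_dpart hU i Os).
Qed.

Lemma dP_rescaled (c : vec r -> R) i s q :
  dP (fun s' q' => redH K U s' (fun a => c s' * q' a)) i s q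
  = c s ^ 2 * (/ 2 * qgrad (fun a b => K a b s) i q).
Proof.
apply: dpartE; apply: (derivable_pt_lim_ext (fun h =>
  c s ^ 2 * (/ 2 * qform (fun a b => K a b s) (shift q i h)) + U s)).
  by move=> h; rewrite /redH -[sumR _]/(qform _ _) qformZ; ring.
apply: (derivable_pt_lim_eq _ (derivable_pt_lim_plus _ _ _ _ _
  (derivable_pt_lim_scal _ _ _ _ (derivable_pt_lim_scal _ (/ 2) _ _ (qform_shift_deriv _ q i)))
  (derivable_pt_lim_const (U s) 0))).
ring.
Qed.

Lemma dS_rescaled (c : vec r -> R) dc i s q : Om s ->
  derivable_pt_lim (fun h => c (shift s i h)) 0 dc ->
  dS (fun s' q' => redH K U s' (fun a => c s' * q' a)) i s q
  = dS (redH K U) i s (fun a => c s * q a) + c s * dc * qform (fun a b => K a b s) q.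
Proof.
move=> Os dc_lim; rewrite dS_redH // qformZ; apply: dpartE.
apply: (derivable_pt_lim_ext (fun h => / 2 * (c (shift s i h) ^ 2
  * qform (fun a b => K a b (shift s i h)) q) + U (shift s i h))).
  by move=> h; rewrite /redH -[sumR _]/(qform _ _) qformZ.
apply: (derivable_pt_lim_eq _ (derivable_pt_lim_plus _ _ _ _ _
  (derivable_pt_lim_scal _ (/ 2) _ _ (derivable_pt_lim_mult _ _ _ _ _
     (derivable_pt_lim_comp _ _ _ _ _ dc_lim (derivable_pt_lim_pow (c (shift s i 0)) 2))
     (qform_coef_deriv q (fun a b => C1_dpart (hK a b) i Os))))
  (C1_dpart hU i Os))).
rewrite /mult_real_fct /Ranalysis1.comp !shift0 /=; field.
Qed.

End ReducedHamiltonian.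

Lemma sumR_skew_sym r (G M : 'I_r -> 'I_r -> R) :
  (forall i j, G i j = - G j i) -> (forall i j, M i j = M j i) ->
  sumR (fun i => sumR (fun j => G i j * M i j)) = 0.
Proof.
move=> Gskew Msym.
suff : sumR (fun i => sumR (fun j => G i j * M i j))
     = - sumR (fun i => sumR (fun j => G i j * M i j)) by lra.
rewrite {1}exchange_sumR -sumRN; apply: eq_sumR => j.
by rewrite -sumRN; apply: eq_sumR => i; rewrite Gskew Msym; ring.
Qed.

Section MeasurePreservation.
Variables (r : nat) (Om : vec r -> Prop) (K : 'I_r -> 'I_r -> vec r -> R) (U : vec r -> R).
Variables (C : 'I_r -> 'I_r -> 'I_r -> vec r -> R) (sigma : vec r -> R) (s0 : vec r).
Hypotheses (hK : forall a b, Ck 1 Om (K a b)) (hU : Ck 1 Om U) (hsig : Ck 1 Om sigma)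
  (Os0 : Om s0) (hskew : forall i j k, C i j k s0 = - C j i k s0).

Let H := redH K U.
Let K0 a b := K a b s0.
Let dK i a b := dpart (K a b) i s0.

Lemma dS_weighted_Xs i p :
  dS (fun s q => exp (sigma s) * Xs H i s q) i s0 p
  = exp (sigma s0) * (dpart sigma i s0 * dP H i s0 p + / 2 * qgrad (dK i) i p).
Proof.
apply: dpartE; apply: (derivable_pt_lim_ext (fun h =>
  exp (sigma (shift s0 i h)) * (/ 2 * qgrad (fun a b => K a b (shift s0 i h)) i p))).
  by move=> h; rewrite /Xs dP_redH.
apply: (derivable_pt_lim_eq _ (derivable_pt_lim_mult _ _ _ _ _
  (derivable_pt_lim_comp _ _ _ _ _ (C1_dpart hsig i Os0) (derivable_pt_lim_exp _))
  (derivable_pt_lim_scal _ (/ 2) _ _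
     (qgrad_coef_deriv i p (fun a b => C1_dpart (hK a b) i Os0))))).
by rewrite /Ranalysis1.comp /mult_real_fct /dK shift0 dP_redH; ring.
Qed.

Lemma dP_weighted_Xp i p :
  dP (fun s q => exp (sigma s) * Xp H C i s q) i s0 p
  = exp (sigma s0) * (- (/ 2 * qgrad (dK i) i p)
      - sumR (fun j => C i j i s0 * dP H j s0 p
                       + sumR (fun k => C i j k s0 * p k) * (/ 2 * (K0 j i + K0 i j)))).
Proof.
apply: dpartE; apply: (derivable_pt_lim_ext (fun h => exp (sigma s0) *
  (- (/ 2 * qform (dK i) (shift p i h) + dpart U i s0)
   - sumR (fun j => sumR (fun k => C i j k s0 * shift p i h k)
                    * (/ 2 * qgrad K0 j (shift p i h)))))).
  move=> h; rewrite /Xp (dS_redH hK hU) //; congr (_ * (- _ - _)).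
  by apply: eq_sumR => j; rewrite sumR_mulr dP_redH.
have dCp j : derivable_pt_lim (fun h => sumR (fun k => C i j k s0 * shift p i h k)) 0 (C i j i s0).
  rewrite -(sumR_kdeltar i (C i j ^~ s0)); apply: derivable_pt_lim_sumR => k.
  exact: derivable_pt_lim_scal _ _ _ _ (shift_deriv p i k 0).
apply: derivable_pt_lim_scal; apply: derivable_pt_lim_minus.
  apply: (derivable_pt_lim_eq _ (derivable_pt_lim_opp _ _ _ (derivable_pt_lim_plus _ _ _ _ _
    (derivable_pt_lim_scal _ (/ 2) _ _ (qform_shift_deriv _ p i)) (derivable_pt_lim_const _ 0)))).
  by rewrite /mult_real_fct; ring.
apply: derivable_pt_lim_sumR => j.
apply: (derivable_pt_lim_eq _ (derivable_pt_lim_mult _ _ _ _ _ (dCp j)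
  (derivable_pt_lim_scal _ (/ 2) _ _ (qgrad_shift_deriv _ j p i)))).
rewrite /mult_real_fct /K0 !shift0 dP_redH; ring.
Qed.

Lemma divergence_weighted p : preserves_measure Om H C sigma ->
  sumR (fun j => (dpart sigma j s0 - sumR (fun i => C i j i s0)) * dP H j s0 p) = 0.
Proof.
move=> hmeas; have := hmeas s0 p Os0.
rewrite (eq_sumR (fun i => dS_weighted_Xs i p)) (eq_sumR (fun i => dP_weighted_Xp i p)).
rewrite -sumRD (eq_sumR (G := fun i => exp (sigma s0) *
  (dpart sigma i s0 * dP H i s0 p - sumR (fun j => C i j i s0 * dP H j s0 p)
   - sumR (fun j => sumR (fun k => C i j k s0 * p k) * (/ 2 * (K0 j i + K0 i j)))))); last first.
  by move=> i; rewrite sumRD; ring.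
have gyro0 : sumR (fun i => sumR (fun j =>
    sumR (fun k => C i j k s0 * p k) * (/ 2 * (K0 j i + K0 i j)))) = 0.
  apply: sumR_skew_sym => i j; last by rewrite /K0; ring.
  by rewrite -sumRN; apply: eq_sumR => k; rewrite hskew; ring.
rewrite -sumR_mull !sumRB gyro0.
move=> /Rmult_integral [/exp_neq_0 []|] <-.
rewrite exchange_sumR Rminus_0_r -sumRB; apply: eq_sumR => j.
by rewrite -sumR_mulr; ring.
Qed.

Lemma dsigma_trace : preserves_measure Om H C sigma ->
  (forall p, (exists i, p i <> 0) -> 0 < qform K0 p) ->
  forall j, dpart sigma j s0 = sumR (fun i => C i j i s0).
Proof.
move=> hmeas hpos j.
set w := fun j => dpart sigma j s0 - sumR (fun i => C i j i s0).
have qw : qform K0 w = 0.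
  rewrite qform_euler -(divergence_weighted w hmeas) sumR_mull.
  by apply: eq_sumR => a; rewrite dP_redH /K0 /w; ring.
have [wj|wj] := Req_dec (w j) 0; first by rewrite /w in wj; lra.
by have := hpos w (ex_intro _ j wj); lra.
Qed.

End MeasurePreservation.

Section HypothesisH.
Variables (r : nat) (C : 'I_r -> 'I_r -> 'I_r -> R).
Hypothesis Cskew : forall i j k, C i j k = - C j i k.

Lemma trace_hypH i j :
  (forall i j k, j != i -> k != i -> C i j j = C i k k) ->
  j != i -> sumR (fun l => C l j l) = (1 - INR r) * C j i i.
Proof.
move=> Cdiag ji; have ij : i != j by rewrite eq_sym.
rewrite (eq_sumR (G := fun l => - C j i i + (if l == j then C j i i else 0))).
  by rewrite sumRD sumR_cst sumR_pred1; ring.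
move=> l; have [->|lj] := eqVneq l j; first by have := Cskew j j j; rewrite /=; lra.
by rewrite Cskew (Cdiag j l i lj ij); ring.
Qed.

Lemma gyroscopic_hypH (phi : 'I_r -> R) :
  (forall i j k, i != j -> j != k -> i != k -> C i j k = 0) ->
  (forall i j, j != i -> C j i i = phi j) ->
  forall i j p, sumR (fun k => C i j k * p k) = phi i * p j - phi j * p i.
Proof.
move=> Cdistinct Cphi i j p.
have [<-|ji] := eqVneq j i.
  by rewrite Rminus_diag -(sumR0 r); apply: eq_sumR => k; have := Cskew j j k; nra.
have ij : i != j by rewrite eq_sym.
rewrite (eq_sumR (G := fun k =>
  (if k == j then C i j k * p k else 0) + (if k == i then C i j k * p k else 0))).
  by rewrite sumRD !sumR_pred1 (Cphi j i ij) Cskew (Cphi i j ji); ring.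
move=> k; have [->|kj] := eqVneq k j; first by rewrite (negbTE ji); ring.
have [->|ki] := eqVneq k i; first ring.
have [ik jk] : i != k /\ j != k by rewrite ![_ == k]eq_sym.
by rewrite (Cdistinct _ _ _ ij jk ik); ring.
Qed.

End HypothesisH.

Lemma Xp_gyroscopic r (H : vec r -> vec r -> R) (C : 'I_r -> 'I_r -> 'I_r -> vec r -> R)
    (phi : 'I_r -> R) i s p :
  (forall j, sumR (fun k => C i j k s * p k) = phi i * p j - phi j * p i) ->
  Xp H C i s p = - dS H i s p
    - (phi i * sumR (fun j => p j * dP H j s p) - p i * sumR (fun j => phi j * dP H j s p)).
Proof.
move=> hC; rewrite /Xp !sumR_mull -sumRB; congr (_ - _); apply: eq_sumR => j.
by rewrite -sumR_mulr hC; ring.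
Qed.

Section Hamiltonisation.
Variables (r : nat) (Om : vec r -> Prop) (K : 'I_r -> 'I_r -> vec r -> R) (U : vec r -> R).
Variables (C : 'I_r -> 'I_r -> 'I_r -> vec r -> R) (sigma : vec r -> R) (k : R).
Hypotheses (hO : open_chart Om) (hK : forall a b, Ck 1 Om (K a b)) (hU : Ck 1 Om U)
  (hsig : Ck 1 Om sigma) (k0 : k <> 0).

Let H := redH K U.
Let f s := exp (sigma s / k).
Let Ht s q := H s (fun a => f s * q a).

Variables (sc pc : R -> vec r) (theta : R -> R) (tau : R).
Let s0 := sc (theta tau).
Let p0 := pc (theta tau).
Hypotheses (Os0 : Om s0) (hth : derivable_pt_lim theta tau (f s0))
  (hsc : forall i, derivable_pt_lim (fun t => sc t i) (theta tau) (Xs H i s0 p0))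
  (hpc : forall i, derivable_pt_lim (fun t => pc t i) (theta tau) (Xp H C i s0 p0))
  (hgyro : forall i j p, sumR (fun l => C i j l s0 * p l)
     = dpart sigma i s0 / k * p j - dpart sigma j s0 / k * p i).

Let f0_neq0 : f s0 <> 0 := Rgt_not_eq _ _ (exp_pos _).

Let div_f0 : (fun a => p0 a / f s0) = (fun a => / f s0 * p0 a).
Proof. by apply: functional_extensionality => a; rewrite Rmult_comm. Qed.

Lemma reparam_ds i :
  derivable_pt_lim (fun u => sc (theta u) i) tau (dP Ht i s0 (fun a => p0 a / f s0)).
Proof.
apply: (derivable_pt_lim_eq _ (derivable_pt_lim_comp _ _ _ _ _ hth (hsc i))).
by rewrite dP_rescaled div_f0 qgradZ /Xs dP_redH; field.
Qed.

Lemma reparam_dp i :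
  derivable_pt_lim (fun u => pc (theta u) i / f (sc (theta u))) tau
    (- dS Ht i s0 (fun a => p0 a / f s0)).
Proof.
have dsigma := chain_rule (x := fun u => sc (theta u)) hO hsig Os0
  (fun l => derivable_pt_lim_comp _ _ _ _ _ hth (hsc l)).
have df := derivable_pt_lim_comp _ _ _ _ _ dsigma (derivable_pt_lim_exp_div k _).
apply: (derivable_pt_lim_eq _ (derivable_pt_lim_div _ _ _ _ _
  (derivable_pt_lim_comp _ _ _ _ _ hth (hpc i)) df f0_neq0)).
have df_shift : derivable_pt_lim (fun h => f (shift s0 i h)) 0 (f s0 * dpart sigma i s0 / k).
  apply: (derivable_pt_lim_eq _ (derivable_pt_lim_comp _ _ _ _ _
    (C1_dpart hsig i Os0) (derivable_pt_lim_exp_div k _))).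
  by rewrite shift0 /f; field.
rewrite /Ranalysis1.comp (dS_rescaled hK hU _ Os0 df_shift) div_f0 qformZ qform_euler.
rewrite (_ : (fun a => f s0 * (p0 a / f s0)) = p0); last first.
  by apply: functional_extensionality => a; field.
rewrite (Xp_gyroscopic H (phi := fun j => dpart sigma j s0 / k) (fun j => hgyro i j p0)).
have -> : sumR (fun l => dpart sigma l s0 * (Xs H l s0 p0 * f s0))
  = k * f s0 * sumR (fun l => dpart sigma l s0 / k * dP H l s0 p0).
  by rewrite sumR_mull; apply: eq_sumR => l; rewrite /Xs; field.
have -> : sumR (fun a => p0 a * qgrad (fun a b => K a b s0) a p0)
  = 2 * sumR (fun a => p0 a * dP H a s0 p0).
  by rewrite sumR_mull; apply: eq_sumR => a; rewrite dP_redH; field.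
rewrite /Rsqr /H /p0 /f /s0; field; split => //.
Qed.

End Hamiltonisation.

Theorem mainTheorem1
  (r : nat) (hr : (2 <= r)%N)
  (Om : vec r -> Prop) (hO : open_chart Om)
  (Kinv : 'I_r -> 'I_r -> vec r -> R) (U : vec r -> R)
  (C : 'I_r -> 'I_r -> 'I_r -> vec r -> R) (sigma : vec r -> R)
  (hK_smooth : forall i j, smooth_on Om (Kinv i j))
  (hK_sym : forall i j s, Om s -> Kinv i j s = Kinv j i s)
  (hK_pos : forall s (p : vec r), Om s -> (exists i, p i <> 0) ->
              0 < sumR (fun i => sumR (fun j => Kinv i j s * p i * p j)))
  (hU_smooth : smooth_on Om U)
  (hC_smooth : forall i j k, smooth_on Om (C i j k))
  (hC_skew : forall i j k s, Om s -> C i j k s = - C j i k s)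
  (hsigma : smooth_on Om sigma)
  (hmeas : preserves_measure Om (redH Kinv U) C sigma)
  (hHyp : hypH Om C) :
  let f := fun s : vec r => exp (sigma s / (1 - INR r)) in
  let Ht := fun s pt : vec r => redH Kinv U s (fun i => f s * pt i) in
  forall (sc pc : R -> vec r) (theta : R -> R) (tau : R),
    Om (sc (theta tau)) ->
    derivable_pt_lim theta tau (f (sc (theta tau))) ->
    (forall i, derivable_pt_lim (fun t => sc t i) (theta tau)
                 (Xs (redH Kinv U) i (sc (theta tau)) (pc (theta tau)))) ->
    (forall i, derivable_pt_lim (fun t => pc t i) (theta tau)
                 (Xp (redH Kinv U) C i (sc (theta tau)) (pc (theta tau)))) ->
    let st := fun u => sc (theta u) in
    let pt := fun u => (fun i => pc (theta u) i / f (st u)) : vec r in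
    forall i : 'I_r,
      derivable_pt_lim (fun u => st u i) tau (dP Ht i (st tau) (pt tau)) /\
      derivable_pt_lim (fun u => pt u i) tau (- dS Ht i (st tau) (pt tau)).
Proof.
move=> f Ht sc pc theta tau Os hth hsc hpc st pt i.
set s0 := sc (theta tau) in Os hth hsc hpc *.
have hK a b := hK_smooth a b 1%N.
have hskew a b c := hC_skew a b c s0 Os.
have [Cdistinct Cdiag] := hHyp s0 Os.
have r1 : 1 - INR r <> 0.
  have : 2 <= INR r by apply: (le_INR 2); apply/leP.
  lra.
have hdsigma := dsigma_trace hK (hU_smooth 1%N) (hsigma 1%N) Os hskew hmeas
  (fun p => hK_pos s0 p Os).
have hphi a b : b != a -> C b a a s0 = dpart sigma b s0 / (1 - INR r).
  move=> ba; rewrite hdsigma (trace_hypH (C := fun a b c => C a b c s0) hskew Cdiag ba).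
  by field.
have hgyro := gyroscopic_hypH (C := fun a b c => C a b c s0) hskew Cdistinct hphi.
split; first exact (reparam_ds hth hsc i).
exact (reparam_dp hO hK (hU_smooth 1%N) (hsigma 1%N) r1 Os hth hsc hpc hgyro i).
Qed.
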